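(* Let $K=\mathbb{Q}(\sqrt{d})$ with $d>1$ square-free, let $R_K$ be its regulator, and let $a=a_1+a_2\sqrt{d}$ ($a_1,a_2\in\mathbb{Q}$) be a totally positive element of $K$. Then $a\in\mathcal{F}_K$ if and only if $$\frac{|a_2|}{a_1}\le\frac{\tanh(R_K)}{\sqrt{d}}.$$
   Context: For a totally real number field $K$ with unit group $\mathcal{O}_K^\times$, a totally positive $a\in K$ is called reduced if $\mathrm{Tr}_{K/\mathbb{Q}}(a)\le \mathrm{Tr}_{K/\mathbb{Q}}(au^2)$ for all $u\in\mathcal{O}_K^\times$; $\mathcal{F}_K$ denotes the set of reduced totally positive elements. For a real quadratic field, $R_K=\log u$ where $u>1$ is the fundamental unit. *)

(* elements of K = Q(sqrt d) are pairs (a1,a2) of rationals,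
   representing a1 + a2 sqrt d. *)
From Stdlib Require Import Reals QArith ZArith Qreals.
Open Scope R_scope.

Definition squarefree (d : Z) : Prop :=
  forall n : Z, (n * n | d)%Z -> Z.abs n = 1%Z.

Definition qf_mul (d : Z) (x y : Q * Q) : Q * Q :=
  ((fst x * fst y + inject_Z d * snd x * snd y)%Q,
   (fst x * snd y + snd x * fst y)%Q).

Definition qf_tr (x : Q * Q) : Q := (2 * fst x)%Q.
Definition qf_norm (d : Z) (x : Q * Q) : Q :=
  (fst x * fst x - inject_Z d * snd x * snd x)%Q.

(* x is an algebraic integer: its characteristic polynomial
   X^2 - Tr(x) X + N(x) has integer coefficients *)
Definition qf_integral (d : Z) (x : Q * Q) : Prop :=
  (exists t : Z, qf_tr x == inject_Z t)%Q /\
  (exists n : Z, qf_norm d x == inject_Z n)%Q.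

Definition qf_unit (d : Z) (u : Q * Q) : Prop :=
  qf_integral d u /\ (qf_norm d u == 1 \/ qf_norm d u == -1)%Q.

Definition emb1 (d : Z) (x : Q * Q) : R := Q2R (fst x) + Q2R (snd x) * sqrt (IZR d).
Definition emb2 (d : Z) (x : Q * Q) : R := Q2R (fst x) - Q2R (snd x) * sqrt (IZR d).

Definition totally_positive (d : Z) (x : Q * Q) : Prop :=
  0 < emb1 d x /\ 0 < emb2 d x.

Definition reduced (d : Z) (a : Q * Q) : Prop :=
  forall u, qf_unit d u -> (qf_tr a <= qf_tr (qf_mul d a (qf_mul d u u)))%Q.

Definition fundamental_unit (d : Z) (eps : Q * Q) : Prop :=
  qf_unit d eps /\ 1 < emb1 d eps /\
  forall v, qf_unit d v -> 1 < emb1 d v -> emb1 d eps <= emb1 d v.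

(* For a unit u with e1 = emb1 u and e2 = emb2 u we have e1^2 e2^2 = 1, and
   Tr(a u^2) = α e1^2 + β e2^2 where α, β are the embeddings of a.  Since
   α x + β y - (α + β) = (x - 1)(α x - β) / x when x y = 1, the trace is
   minimal at u = 1 exactly when this expression is nonnegative for every
   unit square.  No unit square lies strictly between 1 and E^2 (E the
   fundamental unit) or between E^-2 and 1, so it suffices to test u = E and
   u = E^-1 (up to sign, the conjugate of E), i.e. β <= α E^2 and
   α <= β E^2.  With α, β = a1 ± a2 sqrt d and tanh (ln E) = (E^2-1)/(E^2+1)
   these two bounds say |a2| sqrt d <= a1 tanh (ln E). *)
From Stdlib Require Import Reals QArith ZArith Qreals Lra Psatz.
Open Scope R_scope.

Definition qf_opp (x : Q * Q) : Q * Q := (- fst x, - snd x)%Q.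
Definition qf_conj (x : Q * Q) : Q * Q := (fst x, - snd x)%Q.

Lemma Q2R_inject_Z (z : Z) : Q2R (inject_Z z) = IZR z.
Proof. unfold Q2R, inject_Z; simpl. field. Qed.

Lemma Q2R_2 : Q2R 2 = 2.
Proof. unfold Q2R; simpl. field. Qed.

Lemma add_le_mul_add_mul_iff (al be x y : R) :
  1 < x -> x * y = 1 -> al + be <= al * x + be * y <-> be <= al * x.
Proof.
  intros Hx Hxy.
  assert (Hgain : x * (al * x + be * y - (al + be)) = (x - 1) * (al * x - be)).
  { transitivity (al * x * x + be * (x * y) - x * (al + be)); [ring|].
    rewrite Hxy. ring. }
  split; intro H; nra.
Qed.

Lemma bounds_iff_abs_le (k c x : R) :
  1 < k ->
  c - x <= (c + x) * k /\ c + x <= (c - x) * k <->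
  Rabs x <= c * ((k - 1) / (k + 1)).
Proof.
  intros Hk.
  assert (Hscale : forall y, y <= c * ((k - 1) / (k + 1)) <-> y * (k + 1) <= c * (k - 1)).
  { intro y. split; intro H.
    - apply (Rmult_le_compat_r (k + 1)) in H; [|lra].
      replace (c * ((k - 1) / (k + 1)) * (k + 1)) with (c * (k - 1)) in H
        by (field; lra). exact H.
    - apply (Rmult_le_reg_r (k + 1)); [lra|].
      replace (c * ((k - 1) / (k + 1)) * (k + 1)) with (c * (k - 1))
        by (field; lra). exact H. }
  split.
  - intros [Hlo Hhi]. apply Rabs_le. split.
    + assert (- x <= c * ((k - 1) / (k + 1))) by (apply Hscale; lra). lra.
    + apply Hscale; lra.
  - intro H.
    assert (Hx : x <= c * ((k - 1) / (k + 1))) by (pose proof (Rle_abs x); lra).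
    assert (Hnx : - x <= c * ((k - 1) / (k + 1)))
      by (pose proof (Rle_abs (- x)); rewrite Rabs_Ropp in *; lra).
    rewrite Hscale in Hx, Hnx. lra.
Qed.

Lemma tanh_ln (e : R) : 0 < e -> tanh (ln e) = (e ^ 2 - 1) / (e ^ 2 + 1).
Proof.
  intro He. unfold tanh, sinh, cosh. rewrite exp_Ropp, exp_ln by exact He.
  field. split; nra.
Qed.

Lemma Rdiv_le_Rdiv_iff (x a y c : R) :
  0 < a -> 0 < c -> x / a <= y / c <-> x * c <= y * a.
Proof.
  intros Ha Hc.
  replace (x / a) with (x * c / (a * c)) by (field; lra).
  replace (y / c) with (y * a / (a * c)) by (field; lra).
  split; intro H.
  - apply (Rmult_le_reg_r (/ (a * c))); [apply Rinv_0_lt_compat; nra|]. exact H.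
  - apply Rmult_le_compat_r; [left; apply Rinv_0_lt_compat; nra|]. exact H.
Qed.

Section QuadraticField.

Variable d : Z.
Hypothesis d_nonneg : 0 <= IZR d.

Lemma emb1_opp (x : Q * Q) : emb1 d (qf_opp x) = - emb1 d x.
Proof. unfold emb1, qf_opp; simpl. rewrite !Q2R_opp. ring. Qed.

Lemma emb1_conj (x : Q * Q) : emb1 d (qf_conj x) = emb2 d x.
Proof. unfold emb1, emb2, qf_conj; simpl. rewrite Q2R_opp. ring. Qed.

Lemma emb2_conj (x : Q * Q) : emb2 d (qf_conj x) = emb1 d x.
Proof. unfold emb1, emb2, qf_conj; simpl. rewrite Q2R_opp. ring. Qed.

Lemma Q2R_qf_tr (x : Q * Q) : Q2R (qf_tr x) = emb1 d x + emb2 d x.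
Proof. unfold qf_tr, emb1, emb2. rewrite Q2R_mult, Q2R_2. ring. Qed.

Lemma Q2R_d_sqrt_sq : Q2R (inject_Z d) = sqrt (IZR d) * sqrt (IZR d).
Proof. rewrite Q2R_inject_Z. symmetry. exact (sqrt_sqrt _ d_nonneg). Qed.

Lemma Q2R_qf_norm (x : Q * Q) : Q2R (qf_norm d x) = emb1 d x * emb2 d x.
Proof.
  unfold qf_norm, emb1, emb2.
  rewrite Q2R_minus, !Q2R_mult, Q2R_d_sqrt_sq. ring.
Qed.

Lemma emb1_mul (x y : Q * Q) : emb1 d (qf_mul d x y) = emb1 d x * emb1 d y.
Proof.
  unfold emb1, qf_mul; simpl.
  rewrite !Q2R_plus, !Q2R_mult, Q2R_d_sqrt_sq. ring.
Qed.

Lemma emb2_mul (x y : Q * Q) : emb2 d (qf_mul d x y) = emb2 d x * emb2 d y.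
Proof.
  unfold emb2, qf_mul; simpl.
  rewrite !Q2R_plus, !Q2R_mult, Q2R_d_sqrt_sq. ring.
Qed.

Lemma qf_unit_opp (u : Q * Q) : qf_unit d u -> qf_unit d (qf_opp u).
Proof.
  intros [[[t Ht] [n Hn]] Hu].
  assert (Hnorm : (qf_norm d (qf_opp u) == qf_norm d u)%Q)
    by (unfold qf_norm, qf_opp; simpl; ring).
  split; [split|].
  - exists (- t)%Z. rewrite inject_Z_opp, <- Ht. unfold qf_tr, qf_opp; simpl. ring.
  - exists n. rewrite Hnorm. exact Hn.
  - rewrite Hnorm. exact Hu.
Qed.

Lemma qf_unit_conj (u : Q * Q) : qf_unit d u -> qf_unit d (qf_conj u).
Proof.
  intros [[[t Ht] [n Hn]] Hu].
  assert (Hnorm : (qf_norm d (qf_conj u) == qf_norm d u)%Q)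
    by (unfold qf_norm, qf_conj; simpl; ring).
  split; [split|].
  - exists t. exact Ht.
  - exists n. rewrite Hnorm. exact Hn.
  - rewrite Hnorm. exact Hu.
Qed.

Lemma qf_unit_emb_sq (u : Q * Q) :
  qf_unit d u -> emb1 d u ^ 2 * emb2 d u ^ 2 = 1.
Proof.
  intros [_ Hu]. rewrite <- Rpow_mult_distr, <- Q2R_qf_norm.
  destruct Hu as [H | H]; rewrite (Qeq_eqR _ _ H); unfold Q2R; simpl; field.
Qed.

Lemma Q2R_qf_tr_mul_sq (a u : Q * Q) :
  Q2R (qf_tr (qf_mul d a (qf_mul d u u))) =
  emb1 d a * emb1 d u ^ 2 + emb2 d a * emb2 d u ^ 2.
Proof. rewrite Q2R_qf_tr, emb1_mul, emb2_mul, emb1_mul, emb2_mul. ring. Qed.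

Lemma reduced_iff_emb (a : Q * Q) :
  reduced d a <->
  forall u, qf_unit d u ->
    emb1 d a + emb2 d a <= emb1 d a * emb1 d u ^ 2 + emb2 d a * emb2 d u ^ 2.
Proof.
  unfold reduced. split; intros H u Hu.
  - rewrite <- Q2R_qf_tr, <- Q2R_qf_tr_mul_sq. apply Qle_Rle, H, Hu.
  - apply Rle_Qle. rewrite Q2R_qf_tr, Q2R_qf_tr_mul_sq. apply H, Hu.
Qed.

Lemma fundamental_unit_gap (eps u : Q * Q) :
  fundamental_unit d eps -> qf_unit d u ->
  emb1 d u ^ 2 <= 1 \/ emb1 d eps ^ 2 <= emb1 d u ^ 2.
Proof.
  intros [_ [Heps Hmin]] Hu.
  destruct (Rle_or_lt (emb1 d u ^ 2) 1) as [Hle | Hgt]; [left; exact Hle | right].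
  destruct (Rle_or_lt (emb1 d u) 0) as [Hneg | Hpos].
  - assert (Hopp := Hmin _ (qf_unit_opp u Hu)). rewrite emb1_opp in Hopp.
    assert (emb1 d eps <= - emb1 d u) by (apply Hopp; nra). nra.
  - assert (emb1 d eps <= emb1 d u) by (apply Hmin; [exact Hu | nra]). nra.
Qed.

Lemma reduced_iff_bounds (eps a : Q * Q) :
  fundamental_unit d eps -> totally_positive d a ->
  reduced d a <->
  emb2 d a <= emb1 d a * emb1 d eps ^ 2 /\ emb1 d a <= emb2 d a * emb1 d eps ^ 2.
Proof.
  intros Hfund [Hal Hbe].
  pose proof Hfund as [Heps_unit [Heps_gt1 _]].
  set (k := emb1 d eps ^ 2).
  assert (Hk : 1 < k) by (unfold k; nra).
  rewrite reduced_iff_emb. split.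
  - intro H. split.
    + apply (add_le_mul_add_mul_iff _ _ _ (emb2 d eps ^ 2)); [exact Hk | |].
      * apply qf_unit_emb_sq, Heps_unit.
      * apply H, Heps_unit.
    + apply (add_le_mul_add_mul_iff _ _ _ (emb2 d eps ^ 2)); [exact Hk | |].
      * apply qf_unit_emb_sq, Heps_unit.
      * assert (Hconj := H _ (qf_unit_conj _ Heps_unit)).
        rewrite emb1_conj, emb2_conj in Hconj.
        fold k in Hconj. lra.
  - intros [Hlo Hhi] u Hu.
    assert (Hxy := qf_unit_emb_sq u Hu).
    assert (Hgap1 := fundamental_unit_gap eps u Hfund Hu).
    assert (Hgap2 := fundamental_unit_gap eps _ Hfund (qf_unit_conj u Hu)).
    rewrite emb1_conj in Hgap2. fold k in Hgap1, Hgap2.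
    set (x := emb1 d u ^ 2) in *. set (y := emb2 d u ^ 2) in *.
    assert (Hx0 : 0 <= x) by apply pow2_ge_0.
    assert (Hy0 : 0 <= y) by apply pow2_ge_0.
    (* Since x y = 1, either x = y = 1 or one of x, y is at least k. *)
    destruct Hgap1 as [Hx1 | Hkx]; [destruct Hgap2 as [Hy1 | Hky] |].
    + assert (Hx : x = 1) by nra. assert (Hy : y = 1) by nra.
      rewrite Hx, Hy. lra.
    + rewrite (Rplus_comm (emb1 d a)), (Rplus_comm (emb1 d a * x)).
      apply (add_le_mul_add_mul_iff _ _ _ x); [lra | lra | nra].
    + apply (add_le_mul_add_mul_iff _ _ _ y); [lra | exact Hxy | nra].
Qed.

End QuadraticField.

Theorem lemma2 (d : Z) (hd : (1 < d)%Z) (hsf : squarefree d)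
  (eps : Q * Q) (heps : fundamental_unit d eps)
  (a1 a2 : Q) (ha : totally_positive d (a1, a2)) :
  reduced d (a1, a2) <->
  Rabs (Q2R a2) / Q2R a1 <= tanh (ln (emb1 d eps)) / sqrt (IZR d).
Proof.
  assert (Hd : 0 < IZR d) by (apply IZR_lt; lia).
  assert (Hs : 0 < sqrt (IZR d)) by (apply sqrt_lt_R0, Hd).
  assert (Ha1 : 0 < Q2R a1).
  { destruct ha as [H1 H2]. unfold emb1, emb2 in *; simpl in *. lra. }
  assert (Heps : 0 < emb1 d eps) by (destruct heps as [_ [H _]]; lra).
  rewrite (reduced_iff_bounds d (Rlt_le _ _ Hd) eps _ heps ha).
  change (emb1 d (a1, a2)) with (Q2R a1 + Q2R a2 * sqrt (IZR d)).
  change (emb2 d (a1, a2)) with (Q2R a1 - Q2R a2 * sqrt (IZR d)).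
  rewrite tanh_ln, Rdiv_le_Rdiv_iff by assumption.
  replace (Rabs (Q2R a2) * sqrt (IZR d)) with (Rabs (Q2R a2 * sqrt (IZR d)))
    by (rewrite Rabs_mult, (Rabs_pos_eq (sqrt _)); lra).
  rewrite (Rmult_comm (_ / _) (Q2R a1)).
  apply bounds_iff_abs_le. destruct heps as [_ [H _]]. nra.
Qed.
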